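(* Every finite word that occurs as a factor of $\mathbf{t}_{3/2}$ occurs in $\mathbf{t}_{3/2}$ both at some even position and at some odd position.
   Context: The Thue--Morse word in base $3/2$ is the unique binary sequence $\mathbf{t}_{3/2}=(t_n)_{n\ge0}$ with $t_0=0$, $t_{3n}=t_{3n+1}=t_{2n}$ and $t_{3n+2}=1-t_{2n+1}$ for all $n\ge0$ (equivalently, $t_n$ is the digit sum modulo $2$ of the base-$3/2$ expansion of $n$, where $\langle 0\rangle$ is empty and $\langle n\rangle=\langle m\rangle d$ for $2n=3m+d$, $d\in\{0,1,2\}$). A word $u$ occurs at position $i$ if $t_it_{i+1}\cdots t_{i+|u|-1}=u$. *)

From mathcomp Require Import all_boot.

(* Base-3/2 expansion: <0> is empty, <n> = <m> d where 2n = 3m + d, d in {0,1,2}.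
   So m = (2n) %/ 3 and d = (2n) %% 3; for n >= 1, m < n.
   [digsum32_fuel k n] computes the digit sum of <n> provided k >= n. *)
Fixpoint digsum32_fuel (k n : nat) : nat :=
  match k with
  | 0 => 0
  | k'.+1 => if n == 0 then 0
             else digsum32_fuel k' ((n.*2) %/ 3) + (n.*2) %% 3
  end.

Definition digsum32 (n : nat) : nat := digsum32_fuel n n.

Definition t32 (n : nat) : bool := odd (digsum32 n).

Definition occurs_at (u : seq bool) (i : nat) : Prop :=
  forall j, j < size u -> t32 (i + j) = nth false u j.

Definition is_factor (u : seq bool) : Prop := exists i, occurs_at u i.

(* The digit recursion gives t(n) = t(floor(2n/3)) xor [n = 2 mod 3], and since
   floor(2(n + 3z)/3) = floor(2n/3) + 2z, iterating it k >= n times yields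
   t(n + 3^k e) = t(n) xor t(2^k e).  Hence shifting an occurrence at i of a
   factor u by 3^K e, with K = i + |u|, reproduces u or its complement according
   to t(2^K e).  The odd shift 3^K thus moves u or its complement to the other
   parity, and an even shift 2 * 3^K w with t(2^(K+1) w) = 1 complements without
   changing parity.  Such a w exists: t(2 + 3^k e) = 1 xor t(2^k e) for k >= 2,
   so with k = K + 3 and e chosen by Bezout so that 2^(K+1) | 2 + 3^k e, one of
   2^k e and 2 + 3^k e is 2^(K+1) w for a suitable w. *)

From mathcomp Require Import all_boot.
From mathcomp Require Import zify.

Set Implicit Arguments.
Unset Strict Implicit.
Unset Printing Implicit Defensive.

Definition prefix32 (n : nat) : nat := n.*2 %/ 3.

Lemma prefix32_lt n : 0 < n -> prefix32 n < n.
Proof. rewrite /prefix32; lia. Qed.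

Lemma prefix32_addM3 n z : prefix32 (n + 3 * z) = prefix32 n + 2 * z.
Proof. rewrite /prefix32; lia. Qed.

Lemma iter_prefix32_small k n : n <= k -> iter k prefix32 n = 0.
Proof.
elim: k n => [|k IHk] n le_nk; first by move: le_nk; rewrite leqn0 => /eqP ->.
by rewrite iterSr; apply: IHk; rewrite /prefix32; lia.
Qed.

Lemma digsum32_fuel_eq k1 k2 n :
  n <= k1 -> n <= k2 -> digsum32_fuel k1 n = digsum32_fuel k2 n.
Proof.
elim: k1 k2 n => [|k1 IHk] [|k2] n /= le_nk1 le_nk2.
- by [].
- by move: le_nk1; rewrite leqn0 => /eqP ->.
- by move: le_nk2; rewrite leqn0 => /eqP ->.
case: eqP => // /eqP n_neq0.
by rewrite (IHk k2); rewrite /prefix32; lia.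
Qed.

Lemma digsum32_rec n :
  0 < n -> digsum32 n = digsum32 (prefix32 n) + n.*2 %% 3.
Proof.
case: n => [|n] // _; rewrite /digsum32 /=.
by rewrite (@digsum32_fuel_eq n (prefix32 n.+1)) // -ltnS prefix32_lt.
Qed.

Lemma t32_rec n : t32 n = t32 (prefix32 n) (+) (n %% 3 == 2).
Proof.
case: (posnP n) => [-> | n_gt0]; first by [].
rewrite /t32 digsum32_rec // oddD; congr (_ (+) _).
have -> : n.*2 %% 3 = (n %% 3).*2 %% 3 by lia.
have : n %% 3 < 3 by rewrite ltn_mod.
by case: (n %% 3) => [|[|[|]]].
Qed.

Lemma t32_addM3 n z :
  t32 (n + 3 * z) (+) t32 n = t32 (prefix32 n + 2 * z) (+) t32 (prefix32 n).
Proof.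
rewrite t32_rec [t32 n]t32_rec prefix32_addM3.
have -> : (n + 3 * z) %% 3 = n %% 3 by lia.
by rewrite addbACA addbb addbF.
Qed.

Lemma t32_addM3X k n e :
  t32 (n + 3 ^ k * e) (+) t32 n
  = t32 (iter k prefix32 n + 2 ^ k * e) (+) t32 (iter k prefix32 n).
Proof.
elim: k n e => [|k IHk] n e; first by [].
rewrite iterSr expnS -mulnA t32_addM3 mulnCA IHk.
by rewrite mulnA -expnSr.
Qed.

Lemma t32_addM3X_small k n e :
  n <= k -> t32 (n + 3 ^ k * e) = t32 n (+) t32 (2 ^ k * e).
Proof.
move=> le_nk; have := t32_addM3X k n e.
by rewrite iter_prefix32_small // add0n addbF => <-; rewrite addbCA addbb addbF.
Qed.

Lemma t32_mul_pow2 m : exists w, t32 (2 ^ m * w).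
Proof.
(* [t32 2 = true], and [2 <= k] lets the shift lemma apply at [n = 2]. *)
pose k := m.+2.
have [a _ dvd_2m] := Bezoutr (3 ^ k) (expn_gt0 2 m).
have coprime_k_m : coprime (3 ^ k) (2 ^ m) by rewrite coprimeXl ?coprimeXr.
rewrite (eqP coprime_k_m) in dvd_2m.
have : t32 (2 + 3 ^ k * (a.*2)) = ~~ t32 (2 ^ k * (a.*2)).
  by rewrite t32_addM3X_small.
case: (boolP (t32 (2 ^ k * a.*2))) => [t_e _ | _ t_2e].
  by exists (4 * a.*2); rewrite mulnA -[4]/(2 ^ 2) -expnD addn2.
exists ((2 + 3 ^ k * a.*2) %/ 2 ^ m); rewrite mulnC divnK ?t_2e //.
have -> : 2 + 3 ^ k * a.*2 = 2 * (1 + a * 3 ^ k) by lia.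
exact: dvdn_mull.
Qed.

Definition occurs_at_xor (u : seq bool) (i : nat) (b : bool) : Prop :=
  forall j, j < size u -> t32 (i + j) = nth false u j (+) b.

Lemma occurs_at_xorF u i : occurs_at_xor u i false <-> occurs_at u i.
Proof.
by split=> occ_u j lt_ju; rewrite occ_u // addbF.
Qed.

Lemma occurs_at_xor_shift u i b e :
  occurs_at_xor u i b ->
  occurs_at_xor u (i + 3 ^ (i + size u) * e) (b (+) t32 (2 ^ (i + size u) * e)).
Proof.
move=> occ_u j lt_ju.
rewrite addnAC t32_addM3X_small; last by lia.
by rewrite occ_u // addbA.
Qed.

Lemma occurs_at_xor_complement u i b :
  occurs_at_xor u i b -> exists i', odd i' = odd i /\ occurs_at_xor u i' (~~ b).
Proof.
move=> occ_u; have [w t_w] := t32_mul_pow2 (i + size u).+1.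
have := occurs_at_xor_shift (2 * w) occ_u.
rewrite [2 ^ _ * _]mulnA -expnSr t_w addbT => occ_u'.
by eexists; split; last exact: occ_u'; rewrite oddD !oddM /= andbF addbF.
Qed.

Lemma occurs_at_other_parity u i :
  occurs_at u i -> exists i', odd i' = ~~ odd i /\ occurs_at u i'.
Proof.
move=> /occurs_at_xorF /(occurs_at_xor_shift 1); rewrite !muln1 /=.
have odd_shift : odd (i + 3 ^ (i + size u)) = ~~ odd i.
  by rewrite oddD oddX orbT addbT.
case: (t32 _) => occ_u.
  have [i' [odd_i' occ_u']] := occurs_at_xor_complement occ_u.
  by exists i'; rewrite odd_i' odd_shift; split; last exact/occurs_at_xorF.
by exists (i + 3 ^ (i + size u)); split; last exact/occurs_at_xorF.
Qed.

Theorem proposition14 (u : seq bool) :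
  is_factor u ->
  (exists i, ~~ odd i /\ occurs_at u i) /\ (exists i, odd i /\ occurs_at u i).
Proof.
case=> i occ_u; have [i' [odd_i' occ_u']] := occurs_at_other_parity occ_u.
case odd_i: (odd i) odd_i' => /= odd_i'.
  by split; [exists i'; rewrite odd_i' | exists i; rewrite odd_i].
by split; [exists i; rewrite odd_i | exists i'; rewrite odd_i'].
Qed.
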